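(* Let $\mathcal L$ be a linearly ordered non-discrete MV-algebra and let $\mathcal F,\mathcal G$ be filters (in the sense below). Then $\mathcal F\sqsubseteq\!\!\to\mathcal G=\{1\}$ if and only if either $\mathcal G\subseteq\mathcal F$, or there is $g\in L$ with $\mathcal G=[g,1]$ and $\mathcal F=\,]g,1]$.
   Context: $\mathcal L=(L,\oplus,\lnot,0)$ is a linearly ordered MV-algebra. We write $1=\lnot0$ and $x\to y=\lnot x\oplus y$. Non-discrete means no element has an immediate successor or an immediate predecessor. A ''filter'' means a nonempty proper upward-closed subset $\mathcal F$ of $L$ with kernel $\mathcal K(\mathcal F)=\{z:\forall a\notin\mathcal F,\ z\to a\notin\mathcal F\}=\{1\}$. We write $[g,1]=\{x:x\ge g\}$ and $]g,1]=\{x:x>g\}$. For upward-closed $\mathcal F$ and $a\in L$, let $\mathcal F_a=\{z:z\to a\notin\mathcal F\}$. For $\mathcal F\subseteq\mathcal G$ we put $\mathcal F\sqsubseteq\!\!\to\mathcal G=\bigcap_{a\in L\setminus\mathcal G}\mathcal F_a$, and in general $\mathcal F\sqsubseteq\!\!\to\mathcal G:=(\mathcal F\cap\mathcal G)\sqsubseteq\!\!\to\mathcal G$. *)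

Set Implicit Arguments.

Record MVAlgebra := {
  mv_car :> Type;
  mv_oplus : mv_car -> mv_car -> mv_car;
  mv_neg : mv_car -> mv_car;
  mv_zero : mv_car;
  mv_assoc : forall x y z, mv_oplus x (mv_oplus y z) = mv_oplus (mv_oplus x y) z;
  mv_comm : forall x y, mv_oplus x y = mv_oplus y x;
  mv_zero_r : forall x, mv_oplus x mv_zero = x;
  mv_negneg : forall x, mv_neg (mv_neg x) = x;
  mv_one_abs : forall x, mv_oplus x (mv_neg mv_zero) = mv_neg mv_zero;
  mv_luk : forall x y,
    mv_oplus (mv_neg (mv_oplus (mv_neg x) y)) y
    = mv_oplus (mv_neg (mv_oplus (mv_neg y) x)) x
}.

Section MVDefs.
Variable L : MVAlgebra.

Definition mv_one : L := mv_neg L (mv_zero L).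
Definition mv_imp (x y : L) : L := mv_oplus L (mv_neg L x) y.
Definition mv_le (x y : L) : Prop := mv_imp x y = mv_one.
Definition mv_lt (x y : L) : Prop := mv_le x y /\ x <> y.

Definition linearly_ordered : Prop := forall x y : L, mv_le x y \/ mv_le y x.

Definition imm_succ (y x : L) : Prop :=
  mv_lt x y /\ ~ (exists z, mv_lt x z /\ mv_lt z y).
Definition imm_pred (y x : L) : Prop :=
  mv_lt y x /\ ~ (exists z, mv_lt y z /\ mv_lt z x).

Definition non_discrete : Prop :=
  forall x : L, ~ (exists y, imm_succ y x) /\ ~ (exists y, imm_pred y x).

Definition upward_closed (F : L -> Prop) : Prop :=
  forall x y, F x -> mv_le x y -> F y.

Definition kernel (F : L -> Prop) (z : L) : Prop :=
  forall a, ~ F a -> ~ F (mv_imp z a).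

Definition is_filter (F : L -> Prop) : Prop :=
  (exists x, F x) /\ (exists x, ~ F x) /\ upward_closed F /\
  (forall z, kernel F z <-> z = mv_one).

Definition F_sub (F : L -> Prop) (a : L) (z : L) : Prop := ~ F (mv_imp z a).

(* for F subset of G: intersection over a notin G of F_a *)
Definition sub_arrow_aux (F G : L -> Prop) (z : L) : Prop :=
  forall a, ~ G a -> F_sub F a z.

(* general case: F [=-> G := (F cap G) [=-> G *)
Definition sub_arrow (F G : L -> Prop) : L -> Prop :=
  sub_arrow_aux (fun x => F x /\ G x) G.

End MVDefs.

Arguments mv_one {L}.
Arguments mv_imp {L}.
Arguments mv_le {L}.
Arguments mv_lt {L}.
Arguments upward_closed {L}.
Arguments kernel {L}.
Arguments is_filter {L}.
Arguments F_sub {L}.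
Arguments sub_arrow_aux {L}.
Arguments sub_arrow {L}.

(* Both directions are about the "gap" G \ F.
   - (=>) If c -> b lies in F [=-> G for any b <= c in G \ F (a step that only
     uses linearity and upward closure), then c -> b = 1, so c <= b: the gap
     contains at most one point g, and then G = [g,1], F = ]g,1].
   - (<=) The unit 1 always lies in F [=-> G.  Conversely we show that every
     z in F [=-> G lies in the kernel K(G) = {1}.  If G is contained in F this
     is immediate.  If G = [g,1], F = ]g,1] and some a outside G had z -> a in
     G, then z -> a = g; density gives a < m < g with also z -> m = g, and
     since z -> _ is injective below z (x = z (.) (z -> x) for x <= z) we
     would get a = m.
   The file first develops the needed MV-algebra identities, then the order
   facts about upward closed sets, then the two directions. *)

From Stdlib Require Import Classical.

Section MVArithmetic.
Variable L : MVAlgebra.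
Local Notation oplus := (mv_oplus L).
Local Notation neg := (mv_neg L).
Local Notation zero := (mv_zero L).

Lemma neg_one : neg mv_one = zero.
Proof. apply mv_negneg. Qed.

Lemma oplus_zero_l (x : L) : oplus zero x = x.
Proof. rewrite mv_comm; apply mv_zero_r. Qed.

Lemma oplus_one_r (x : L) : oplus x mv_one = mv_one.
Proof. apply mv_one_abs. Qed.

Lemma oplus_one_l (x : L) : oplus mv_one x = mv_one.
Proof. rewrite mv_comm; apply oplus_one_r. Qed.

(* not x (+) x = 1, i.e. x -> x = 1: an instance of axiom MV6 with y = 1. *)
Lemma oplus_neg_self (x : L) : oplus (neg x) x = mv_one.
Proof.
  pose proof (mv_luk L x mv_one) as H.
  rewrite oplus_one_r, neg_one, oplus_zero_l in H.
  symmetry; exact H.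
Qed.

Lemma le_refl (x : L) : mv_le x x.
Proof. apply oplus_neg_self. Qed.

Lemma imp_one_l (a : L) : mv_imp mv_one a = a.
Proof. unfold mv_imp; rewrite neg_one; apply oplus_zero_l. Qed.

Lemma one_le_eq (x : L) : mv_le mv_one x -> x = mv_one.
Proof. unfold mv_le; rewrite imp_one_l; trivial. Qed.

Lemma join_le (b c : L) : mv_le b c -> oplus (neg (mv_imp c b)) b = c.
Proof.
  intro H. unfold mv_le, mv_imp in *.
  rewrite mv_luk, H, neg_one, oplus_zero_l. reflexivity.
Qed.

Lemma meet_le (x y : L) : mv_le y x -> neg (oplus (neg x) (neg (mv_imp x y))) = y.
Proof.
  intro H. pose proof (mv_luk L (neg y) (neg x)) as E.
  rewrite !mv_negneg in E. unfold mv_le, mv_imp in *.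
  rewrite (mv_comm L x (neg y)), H, neg_one, oplus_zero_l in E.
  rewrite (mv_comm L y (neg x)), (mv_comm L (neg _) (neg x)) in E.
  rewrite E, mv_negneg. reflexivity.
Qed.

Lemma le_antisym (a b : L) : mv_le a b -> mv_le b a -> a = b.
Proof.
  intros Hab Hba. pose proof (meet_le b a Hab) as E.
  rewrite Hba, neg_one, mv_zero_r, mv_negneg in E.
  symmetry; exact E.
Qed.

Lemma oplus_mono_r (x a b : L) : mv_le a b -> mv_le (oplus x a) (oplus x b).
Proof.
  intro H. rewrite <- (join_le a b H).
  set (w := neg (mv_imp b a)). unfold mv_le, mv_imp.
  rewrite (mv_comm L w a), (mv_assoc L x a w), mv_assoc, oplus_neg_self, oplus_one_l.
  reflexivity.
Qed.

Lemma imp_mono_r (z a b : L) : mv_le a b -> mv_le (mv_imp z a) (mv_imp z b).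
Proof. apply oplus_mono_r. Qed.

(* z -> _ is injective on the elements below z, since x = z (.) (z -> x). *)
Lemma imp_inj_below (z a b : L) :
  mv_le a z -> mv_le b z -> mv_imp z a = mv_imp z b -> a = b.
Proof.
  intros Ha Hb E. rewrite <- (meet_le z a Ha), <- (meet_le z b Hb), E.
  reflexivity.
Qed.

End MVArithmetic.

Section LinearOrder.
Context {L : MVAlgebra}.
Hypothesis Hlin : linearly_ordered L.

Lemma le_of_out_in (G : L -> Prop) (a b : L) :
  upward_closed G -> ~ G a -> G b -> mv_le a b.
Proof.
  intros UG nGa Gb. destruct (Hlin a b) as [ab | ba]; [exact ab |].
  exfalso; exact (nGa (UG b a Gb ba)).
Qed.

Lemma le_of_imp_ne_one (z a : L) : mv_imp z a <> mv_one -> mv_le a z.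
Proof.
  intro Hne. destruct (Hlin a z) as [az | za]; [exact az |].
  exfalso; exact (Hne za).
Qed.

End LinearOrder.

Lemma dense_of_non_discrete {L : MVAlgebra} (a b : L) :
  non_discrete L -> mv_lt a b -> exists m, mv_lt a m /\ mv_lt m b.
Proof.
  intros Hnd ab. apply NNPP; intro Hno.
  apply (proj2 (Hnd b)). exists a. split; assumption.
Qed.

Section SubArrow.
Context {L : MVAlgebra}.
Hypothesis Hlin : linearly_ordered L.
Context {F G : L -> Prop}.
Hypothesis UF : upward_closed F.
Hypothesis UG : upward_closed G.

Lemma sub_arrow_one : sub_arrow F G mv_one.
Proof. intros a nGa [_ Ga]. rewrite imp_one_l in Ga. exact (nGa Ga). Qed.

(* For b <= c in the gap G \ F, the element c -> b belongs to F [=-> G: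
   with z = c -> b, every a outside G is below b, so z -> a <= z -> b = c
   and z -> a is not in F. *)
Lemma gap_imp_sub_arrow (b c : L) :
  G b -> ~ F c -> mv_le b c -> sub_arrow F G (mv_imp c b).
Proof.
  intros Gb nFc bc a nGa [Fa _]. apply nFc, (UF _ c Fa).
  rewrite <- (join_le L b c bc) at 2.
  apply oplus_mono_r, (le_of_out_in Hlin G a b UG nGa Gb).
Qed.

Lemma gap_subsingleton :
  (forall z, sub_arrow F G z -> z = mv_one) ->
  forall b c, G b -> ~ F b -> G c -> ~ F c -> b = c.
Proof.
  intros Htriv.
  assert (Hle : forall b c, G b -> ~ F c -> mv_le b c -> ~ F b -> b = c).
  { intros b c Gb nFc bc nFb. apply le_antisym; [exact bc |].
    exact (Htriv _ (gap_imp_sub_arrow b c Gb nFc bc)). }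
  intros b c Gb nFb Gc nFc. destruct (Hlin b c) as [bc | cb].
  - exact (Hle b c Gb nFc bc nFb).
  - symmetry; exact (Hle c b Gc nFb cb nFc).
Qed.

Lemma gap_point_shape (g : L) :
  G g -> ~ F g -> (forall y, G y -> ~ F y -> y = g) ->
  (forall x, G x <-> mv_le g x) /\ (forall x, F x <-> mv_lt g x).
Proof.
  intros Gg nFg Hgap.
  assert (Fle : forall x, F x -> mv_le g x) by (intros x; apply (le_of_out_in Hlin F g x UF nFg)).
  split; intro x; split.
  - intro Gx. destruct (classic (F x)) as [Fx | nFx]; [exact (Fle x Fx) |].
    rewrite (Hgap x Gx nFx). apply le_refl.
  - intro gx. exact (UG g x Gg gx).
  - intro Fx. split; [exact (Fle x Fx) |]. intro e; subst x; exact (nFg Fx).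
  - intros [gx ne]. apply NNPP; intro nFx.
    exact (ne (eq_sym (Hgap x (UG g x Gg gx) nFx))).
Qed.

Lemma sub_arrow_kernel_of_incl (z : L) :
  (forall x, G x -> F x) -> sub_arrow F G z -> kernel G z.
Proof. intros Hsub Hz a nGa Ga. exact (Hz a nGa (conj (Hsub _ Ga) Ga)). Qed.

Section GapPoint.
Variable g : L.
Hypothesis HGg : forall x, G x <-> mv_le g x.
Hypothesis HFg : forall x, F x <-> mv_lt g x.

Lemma gap_point_unique (y : L) : G y -> ~ F y -> y = g.
Proof.
  intros Gy nFy. apply NNPP; intro ne. apply nFy, HFg.
  split; [apply HGg; exact Gy | intro e; exact (ne (eq_sym e))].
Qed.

Lemma sub_arrow_imp_gap (z a : L) :
  sub_arrow F G z -> ~ G a -> G (mv_imp z a) -> mv_imp z a = g.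
Proof.
  intros Hz nGa Ga. apply gap_point_unique; [exact Ga |].
  intro Fa. exact (Hz a nGa (conj Fa Ga)).
Qed.

Lemma sub_arrow_kernel_of_gap (z : L) :
  non_discrete L -> (exists x, F x) -> sub_arrow F G z -> kernel G z.
Proof.
  intros Hnd [f Ff] Hz a nGa Ga.
  assert (Gg : G g) by (apply HGg, le_refl).
  assert (g_ne_one : g <> mv_one).
  { intro e. apply HFg in Ff. destruct Ff as [gf ne].
    rewrite e in gf, ne. exact (ne (eq_sym (one_le_eq L f gf))). }
  assert (a_lt_g : mv_lt a g).
  { split; [exact (le_of_out_in Hlin G a g UG nGa Gg) |].
    intro e; subst a; exact (nGa Gg). }
  destruct (dense_of_non_discrete a g Hnd a_lt_g) as [m [[am a_ne_m] [mg m_ne_g]]].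
  assert (nGm : ~ G m) by (intro Gm; exact (m_ne_g (le_antisym L m g mg (proj1 (HGg m) Gm)))).
  assert (za : mv_imp z a = g) by exact (sub_arrow_imp_gap z a Hz nGa Ga).
  assert (zm : mv_imp z m = g).
  { apply (sub_arrow_imp_gap z m Hz nGm).
    exact (UG _ _ Ga (imp_mono_r L z a m am)). }
  apply a_ne_m, (imp_inj_below L z).
  - apply (le_of_imp_ne_one Hlin); rewrite za; exact g_ne_one.
  - apply (le_of_imp_ne_one Hlin); rewrite zm; exact g_ne_one.
  - rewrite za, zm; reflexivity.
Qed.

End GapPoint.
End SubArrow.

Theorem mainTheorem16 (L : MVAlgebra)
  (Hlin : linearly_ordered L) (Hnd : non_discrete L)
  (F G : L -> Prop) (HF : is_filter F) (HG : is_filter G) :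
  (forall z, sub_arrow F G z <-> z = mv_one) <->
  ((forall x, G x -> F x) \/
   (exists g : L, (forall x, G x <-> mv_le g x) /\ (forall x, F x <-> mv_lt g x))).
Proof.
  destruct HF as [F_nonempty [_ [UF _]]].
  destruct HG as [_ [_ [UG KG]]].
  split.
  - intro Htriv.
    destruct (classic (forall x, G x -> F x)) as [Hsub | Hnsub]; [left; exact Hsub | right].
    destruct (not_all_ex_not _ _ Hnsub) as [g Hg].
    destruct (imply_to_and _ _ Hg) as [Gg nFg].
    exists g. apply (gap_point_shape Hlin UF UG g Gg nFg).
    intros y Gy nFy.
    exact (gap_subsingleton Hlin UF UG (fun z => proj1 (Htriv z)) y g Gy nFy Gg nFg).
  - intros Hcase z. split.
    + intro Hz. apply KG. destruct Hcase as [Hsub | [g [HGg HFg]]].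
      * exact (sub_arrow_kernel_of_incl z Hsub Hz).
      * exact (sub_arrow_kernel_of_gap Hlin UG g HGg HFg z Hnd F_nonempty Hz).
    + intro e; subst z. exact sub_arrow_one.
Qed.
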